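(* Let $r_1,r_2,r_3$ be fixed integers and $i,j,k$ fixed non-negative integers. For $n\ge0$ set $$\sigma^{(n)}_{ijk}=\sum_{v+w=i+j+k+n+r_3}(-1)^{v-i}\binom{n+r_1-i}{v-i}\binom{r_2-j}{w-j}.$$ Then there exist polynomials $p_1,p_2$ such that $\sigma^{(n)}_{ijk}=(-1)^n\big(p_1(n)+2^np_2(n)\big)$ for all sufficiently large $n$.
   Context: Binomial coefficients $\binom{x}{m}$ are the generalized ones $x(x-1)\cdots(x-m+1)/m!$ for integers $m\ge0$, and are $0$ for $m<0$; the sum runs over integers $v,w$ (only finitely many terms are nonzero for $n$ large). *)

From mathcomp Require Import all_boot all_order all_algebra.
Set Implicit Arguments. Unset Strict Implicit. Unset Printing Implicit Defensive.
Import Order.TTheory GRing.Theory Num.Theory.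
Local Open Scope ring_scope.

Definition binz (x m : int) : rat :=
  if m < 0 then 0
  else (\prod_(l < `|m|%N) ((x - l%:Z)%:~R : rat)) / ((`|m|%N)`!)%:R.

(* sigma^{(n)}_{ijk} = sum_{v+w = i+j+k+n+r3} (-1)^(v-i) C(n+r1-i, v-i) C(r2-j, w-j).
   Terms vanish unless v >= i and w >= j, i.e. unless v = i + t with
   0 <= t <= M := k + n + r3 (then w = i+j+k+n+r3 - v).  So the sum over all
   integers v, w is the finite sum below (empty when M < 0). *)
Definition sigma (r1 r2 r3 : int) (i j k n : nat) : rat :=
  let Ntot : int := (i + j + k + n)%:Z + r3 in
  let M : int := (k + n)%:Z + r3 in
  let cnt : nat := if 0 <= M then (`|M|%N).+1 else 0%N in
  \sum_(t < cnt)
    let v : int := (i + t)%:Z in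
    let w : int := Ntot - v in
    ((-1 : rat) ^ (v - i%:Z)) * binz (n%:Z + r1 - i%:Z) (v - i%:Z)
                              * binz (r2 - j%:Z) (w - j%:Z).

From mathcomp Require Import all_boot all_order all_algebra.
From mathcomp Require Import zify ring lra.
Import Order.TTheory GRing.Theory Num.Theory.
Local Open Scope ring_scope.

(* With S(a, b, M) = sum_t (-1)^t C(a, t) C(b, M - t), sigma^(n) is
   S(n + d, b, n + c) for constants d, b, c.  By induction on b in both
   directions, S(n + d, b, n + c) = (-1)^n (P(n) + 2^n Q(n)) for large n, with
   P, Q eventually polynomial.  For b = 0 the sum collapses to (-1)^M C(a, M),
   and C(n + d, n + c) is eventually polynomial in n.  Pascal's rule in b gives
   S(a, b + 1, M) = S(a, b, M) + S(a, b, M - 1).  Combined with Pascal's rule in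
   a, h(n) = S(n + d, b - 1, n + c) satisfies
   h(n + 1) + 2 h(n) = S(n + d, b, n + c + 1), and solving this first-order
   recurrence keeps the shape, its homogeneous part giving the (-2)^n term.
   "Eventually polynomial" means that an iterated forward difference eventually
   vanishes; Newton's forward-difference formula then yields the polynomial. *)

Lemma binzE (x : int) (m : nat) :
  binz x m = (\prod_(l < m) ((x - l%:Z)%:~R : rat)) / (m`!)%:R.
Proof. by []. Qed.

Lemma binz_lt0 (x m : int) : m < 0 -> binz x m = 0.
Proof. by rewrite /binz => ->. Qed.

Lemma binz0 (x : int) : binz x 0 = 1.
Proof. by rewrite binzE big_ord0 divr1. Qed.

Lemma binz_pascal (x m : int) :
  binz x m = binz (x - 1) m + binz (x - 1) (m - 1).
Proof.
case: m => [[|m]|m]; last by rewrite !binz_lt0 ?addr0 // NegzE; lia.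
  by rewrite !binz0 binz_lt0 ?addr0.
have -> : Posz m.+1 - 1 = Posz m by lia.
rewrite !binzE big_ord_recl big_ord_recr /=.
rewrite (eq_bigr (fun l : 'I_m => ((x - 1 - l%:Z)%:~R : rat))); last first.
  by move=> l _; congr (_%:~R); rewrite /bump /=; lia.
have fact_neq0 : (m`!)%:R != 0 :> rat by rewrite pnatr_eq0 -lt0n fact_gt0.
have m1_neq0 : (m.+1)%:R != 0 :> rat by rewrite pnatr_eq0.
rewrite factS natrM !intrD !intrN /=.
by field; rewrite fact_neq0 -(natrD _ 1 m) m1_neq0.
Qed.

Lemma binz_eq0 (x m : int) : 0 <= x -> x < m -> binz x m = 0.
Proof.
case: x => [x|x] x_ge0; last by move: x_ge0; rewrite NegzE; lia.
case: m => [m|m] x_lt_m; last by move: x_lt_m; rewrite NegzE; lia.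
rewrite binzE (bigD1 (Ordinal (_ : x < m)%N)) /=; last by lia.
by rewrite subrr mul0r mul0r.
Qed.

Lemma binz_nat (m k : nat) : binz m k = ('C(m, k))%:R.
Proof.
elim: m k => [|m IHm] [|k]; rewrite ?binz0 ?bin0 //.
  by rewrite binz_eq0 // bin0n.
rewrite binz_pascal binS natrD -!IHm.
by congr (binz _ _ + binz _ _); lia.
Qed.

Definition nterms (M : int) : nat := if 0 <= M then (`|M|%N).+1 else 0%N.

Lemma nterms_nat (m : nat) : nterms m = m.+1.
Proof. by []. Qed.

Lemma nterms_lt0 (M : int) : M < 0 -> nterms M = 0%N.
Proof. by rewrite /nterms ltNge => /negbTE ->. Qed.

Lemma nterms_natB1 (m : nat) : nterms (m%:Z - 1) = m.
Proof. by case: m => // m; have -> : Posz m.+1 - 1 = m by lia. Qed.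

Definition alt_conv (a b M : int) : rat :=
  \sum_(t < nterms M) (-1) ^+ t * binz a t * binz b (M - t%:Z).

Lemma alt_conv_lt0 (a b M : int) : M < 0 -> alt_conv a b M = 0.
Proof. by move=> M_lt0; rewrite /alt_conv nterms_lt0 // big_ord0. Qed.

Lemma alt_conv_b0 (a : int) (m : nat) : alt_conv a 0 m = (-1) ^+ m * binz a m.
Proof.
rewrite /alt_conv nterms_nat big_ord_recr /= big1 ?add0r ?subrr ?binz0 ?mulr1 //.
by move=> t _; rewrite (@binz_eq0 0) ?mulr0 //; have := ltn_ord t; lia.
Qed.

Lemma alt_conv_pascal_b (a b M : int) :
  alt_conv a b M = alt_conv a (b - 1) M + alt_conv a (b - 1) (M - 1).
Proof.
case: M => [m|m]; last by rewrite !alt_conv_lt0 ?addr0 // NegzE; lia.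
rewrite /alt_conv nterms_nat nterms_natB1.
under eq_bigr do rewrite (binz_pascal b) mulrDr.
rewrite big_split /=; congr (_ + _).
rewrite big_ord_recr /= [binz _ (_ - _ - 1)]binz_lt0 ?mulr0 ?addr0; last by lia.
by apply: eq_bigr => t _; congr (_ * binz _ _); lia.
Qed.

Lemma alt_conv_pascal_a (a b M : int) :
  alt_conv a b M = alt_conv (a - 1) b M - alt_conv (a - 1) b (M - 1).
Proof.
case: M => [m|m]; last by rewrite !alt_conv_lt0 ?subr0 // NegzE; lia.
rewrite /alt_conv nterms_nat nterms_natB1.
under eq_bigr do rewrite (binz_pascal a) mulrDr mulrDl.
rewrite big_split /=; congr (_ + _).
rewrite big_ord_recl /= [binz _ (_ - 1)]binz_lt0 // mulr0 mul0r add0r.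
rewrite -sumrN; apply: eq_bigr => t _.
rewrite /bump /= exprS !mulN1r !mulNr.
by congr (- (_ * binz _ _ * binz _ _)); lia.
Qed.

Definition delta (f : nat -> rat) (n : nat) : rat := f n.+1 - f n.

Definition deltan (k : nat) (f : nat -> rat) : nat -> rat := iter k delta f.

Lemma deltanS k f n : deltan k.+1 f n = deltan k f n.+1 - deltan k f n.
Proof. by []. Qed.

Lemma deltanSr k f n : deltan k.+1 f n = deltan k (delta f) n.
Proof. by rewrite /deltan iterSr. Qed.

Lemma deltan_comp k l f n : deltan (k + l) f n = deltan k (deltan l f) n.
Proof. by rewrite /deltan iterD. Qed.

Lemma deltanD k f g n :
  deltan k (fun m => f m + g m) n = deltan k f n + deltan k g n.
Proof. by elim: k n => [|k IHk] n //; rewrite !deltanS !IHk; ring. Qed.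

Lemma deltanZ k c f n : deltan k (fun m => c * f m) n = c * deltan k f n.
Proof. by elim: k n => [|k IHk] n //; rewrite !deltanS !IHk; ring. Qed.

Lemma deltan_sum k m (F : nat -> nat -> rat) n :
  deltan k (fun n => \sum_(i < m) F i n) n = \sum_(i < m) deltan k (F i) n.
Proof. by elim: k n => [|k IHk] n //; rewrite deltanS !IHk -sumrB. Qed.

Lemma deltan_eq {N f g} : (forall n, (N <= n)%N -> f n = g n) ->
  forall k n, (N <= n)%N -> deltan k f n = deltan k g n.
Proof.
move=> eq_fg; elim=> [|k IHk] n le_Nn; first exact: eq_fg.
by rewrite !deltanS !IHk // leqW.
Qed.

Lemma deltan_eq0 {N f} : (forall n, (N <= n)%N -> f n = 0) ->
  forall k n, (N <= n)%N -> deltan k f n = 0.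
Proof.
move=> f0 k n le_Nn; rewrite (deltan_eq (g := fun=> 0) f0) //.
by elim: k n {le_Nn} => [|k IHk] n //; rewrite deltanS !IHk subrr.
Qed.

Lemma deltan_eq0_leq {K N f} : (forall n, (N <= n)%N -> deltan K f n = 0) ->
  forall k n, (K <= k)%N -> (N <= n)%N -> deltan k f n = 0.
Proof.
by move=> fK0 k n /subnK <- le_Nn; rewrite deltan_comp (deltan_eq0 fK0).
Qed.

Definition eventually_poly (f : nat -> rat) :=
  exists K N, forall n, (N <= n)%N -> deltan K f n = 0.

Lemma eventually_poly_eq N {f g} :
  (forall n, (N <= n)%N -> g n = f n) -> eventually_poly f -> eventually_poly g.
Proof.
move=> eq_gf [K [N' fK0]]; exists K, (maxn N N').
by move=> n; rewrite geq_max => /andP[le_Nn le_N'n]; rewrite (deltan_eq eq_gf) ?fK0.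
Qed.

Lemma eventually_polyD {f g} : eventually_poly f -> eventually_poly g ->
  eventually_poly (fun n => f n + g n).
Proof.
move=> [K [N fK0]] [L [M gL0]]; exists (maxn K L), (maxn N M).
move=> n; rewrite geq_max => /andP[le_Nn le_Mn].
rewrite deltanD (deltan_eq0_leq fK0) ?(deltan_eq0_leq gL0) ?addr0 //.
  exact: leq_maxr.
exact: leq_maxl.
Qed.

Lemma eventually_polyZ c {f} : eventually_poly f -> eventually_poly (fun n => c * f n).
Proof. by move=> [K [N fK0]]; exists K, N => n le_Nn; rewrite deltanZ fK0 ?mulr0. Qed.

Lemma eventually_poly_const c : eventually_poly (fun _ => c).
Proof. by exists 1%N, 0%N => n _; rewrite deltanS subrr. Qed.

Lemma eventually_poly_delta {f} : eventually_poly (delta f) -> eventually_poly f.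
Proof. by move=> [K [N fK0]]; exists K.+1, N => n le_Nn; rewrite deltanSr fK0. Qed.

Lemma eventually_poly_partial_sum {f} :
  eventually_poly f -> eventually_poly (fun n => \sum_(m < n) f m).
Proof.
move=> fP; apply: eventually_poly_delta; apply: (eventually_poly_eq 0) fP => n _.
by rewrite /delta big_ord_recr /= addrAC subrr add0r.
Qed.

Lemma eventually_poly_binz (d c : int) :
  eventually_poly (fun n => binz (n%:Z + d) (n%:Z + c)).
Proof.
have [e lt_dc_e] : exists e : nat, d - c < e%:Z by exists (absz (d - c)).+1; lia.
elim: e d c lt_dc_e => [|e IHe] d c lt_dc_e.
  apply: (eventually_poly_eq (absz d)) (eventually_poly_const 0) => n le_dn.
  by apply: binz_eq0; lia.
apply: eventually_poly_delta; apply: (eventually_poly_eq 0) (IHe d (c + 1) _) => [n _|].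
  rewrite /delta binz_pascal; apply/eqP; rewrite subr_eq; apply/eqP.
  by congr (binz _ _ + binz _ _); lia.
by lia.
Qed.

Lemma newton_forward {K f N} : (forall n, (N <= n)%N -> deltan K f n = 0) ->
  forall m, f (N + m)%N = \sum_(k < K) deltan k f N * ('C(m, k))%:R.
Proof.
elim: K f => [|K IHK] f fK0 m.
  by rewrite big_ord0 -[f _]/(deltan 0 f _) fK0 ?leq_addr.
have deltaK0 n : (N <= n)%N -> deltan K (delta f) n = 0.
  by rewrite -deltanSr; apply: fK0.
elim: m => [|m IHm].
  rewrite addn0 big_ord_recl big1 ?bin0 ?addr0 ?mulr1 // => k _.
  by rewrite bin0n mulr0.
have -> : f (N + m.+1)%N = f (N + m)%N + delta f (N + m)%N.
  by rewrite /delta addnS; ring.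
rewrite IHm (IHK _ deltaK0) big_ord_recl [in RHS]big_ord_recl !bin0.
rewrite -addrA -big_split /=.
congr (_ + _); apply: eq_bigr => k _.
by rewrite /bump /= add0n -deltanSr binS natrD mulrDr.
Qed.

Lemma eventually_polyP {f} : eventually_poly f ->
  exists (p : {poly rat}) (N : nat), forall n, (N <= n)%N -> f n = p.[n%:R].
Proof.
move=> [K [N fK0]].
exists (\sum_(k < K)
  (deltan k f N / (k`!)%:R) *: \prod_(l < k) ('X - (N + l)%:R%:P)), N.
move=> n le_Nn; rewrite -(subnKC le_Nn) (newton_forward fK0) horner_sum.
apply: eq_bigr => k _; rewrite hornerZ horner_prod -binz_nat binzE mulrAC mulrA.
congr (_ * _ * _); apply: eq_bigr => l _.
by rewrite hornerXsubC intrB !natrD; ring.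
Qed.

Lemma eventually_poly_solve_doubling {P} : eventually_poly P ->
  exists2 A, eventually_poly A &
    exists N, forall n, (N <= n)%N -> A n.+1 = 2 * A n - P n.
Proof.
move=> [K [N PK0]]; pose A n := \sum_(k < K) deltan k P n.
exists A; first exists K, N => n le_Nn.
  rewrite deltan_sum big1 // => k _.
  by rewrite -deltan_comp (deltan_eq0_leq PK0) ?leq_addr.
exists N => n le_Nn.
(* Peel the sum over k <= K from each end: P n + (A n.+1 - A n) = A n + 0. *)
have := erefl (\sum_(k < K.+1) deltan k P n).
rewrite {1}big_ord_recl big_ord_recr /= PK0 // addr0 /delta.
under eq_bigr do rewrite add0n.
by rewrite sumrB /A; lra.
Qed.

Lemma eventually_geometric {R : fieldType} {c : R} {e : nat -> R} {N} : c != 0 ->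
  (forall n, (N <= n)%N -> e n.+1 = c * e n) ->
  forall n, (N <= n)%N -> e n = c ^+ n * (e N / c ^+ N).
Proof.
move=> c_neq0 eS n /subnK <-; elim: (n - N)%N => [|m IHm].
  by rewrite add0n mulrCA divff ?mulr1 ?expf_neq0.
by rewrite addSn eS ?leq_addl // IHm exprS mulrA.
Qed.

Definition quasipoly (f : nat -> rat) :=
  exists P Q N, [/\ eventually_poly P, eventually_poly Q &
    forall n, (N <= n)%N -> f n = (-1) ^+ n * (P n + 2 ^+ n * Q n)].

Lemma quasipoly_eq N {f g} :
  (forall n, (N <= n)%N -> g n = f n) -> quasipoly f -> quasipoly g.
Proof.
move=> eq_gf [P [Q [N' [PP PQ fE]]]]; exists P, Q, (maxn N N'); split=> // n.
by rewrite geq_max => /andP[le_Nn le_N'n]; rewrite eq_gf ?fE.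
Qed.

Lemma quasipolyD {f g} : quasipoly f -> quasipoly g -> quasipoly (fun n => f n + g n).
Proof.
move=> [P [Q [N [PP PQ fE]]]] [P' [Q' [N' [PP' PQ' gE]]]].
exists (fun n => P n + P' n), (fun n => Q n + Q' n), (maxn N N').
split; [exact: eventually_polyD | exact: eventually_polyD |] => n.
by rewrite geq_max => /andP[le_Nn le_N'n]; rewrite fE ?gE //; ring.
Qed.

Lemma quasipoly_of_rec h : quasipoly (fun n => h n.+1 + 2 * h n) -> quasipoly h.
Proof.
move=> [P [Q [N0 [PP PQ hE]]]].
have [A PA [N1 AE]] := eventually_poly_solve_doubling PP.
pose B n := \sum_(m < n) - 2^-1 * Q m.
have PB : eventually_poly B := eventually_poly_partial_sum (eventually_polyZ _ PQ).
pose e n := h n - (-1) ^+ n * (A n + 2 ^+ n * B n).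
pose N := maxn N0 N1.
have eE : forall n, (N <= n)%N -> e n.+1 = -2 * e n.
  move=> n; rewrite geq_max => /andP[le_N0n le_N1n].
  have hS : h n.+1 = (-1) ^+ n * (P n + 2 ^+ n * Q n) - 2 * h n.
    by rewrite -hE //; ring.
  by rewrite /e hS AE // /B big_ord_recr /= !exprS; field.
exists A, (fun n => B n + e N / (-2) ^+ N), N; split=> //.
  exact: eventually_polyD PB (eventually_poly_const _).
move=> n le_Nn; rewrite -[h n](subrK ((-1) ^+ n * (A n + 2 ^+ n * B n))).
rewrite -/(e n) (eventually_geometric _ eE) // -mulN1r exprMn; ring.
Qed.

Lemma sign_absz_addn (n : nat) (c : int) : 0 <= n%:Z + c ->
  (-1) ^+ absz (n%:Z + c) = (-1) ^+ n * (-1) ^+ absz c :> rat.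
Proof.
case: c => [c|c] nc_ge0; first by rewrite -exprD.
have nE : n = (absz (n%:Z + Negz c)%R + c.+1)%N by move: nc_ge0; rewrite NegzE; lia.
rewrite {2}nE exprD -mulrA -exprD [absz (Negz c)]/= addnn -mul2n mulnC exprM.
by rewrite sqrr_sign mulr1.
Qed.

Definition conv_seq (d b c : int) (n : nat) : rat := alt_conv (n%:Z + d) b (n%:Z + c).

Lemma quasipoly_conv_seq0 d c : quasipoly (conv_seq d 0 c).
Proof.
exists (fun n => (-1) ^+ absz c * binz (n%:Z + d) (n%:Z + c)), (fun _ => 0), (absz c).
split; first exact: eventually_polyZ _ (eventually_poly_binz _ _).
  exact: eventually_poly_const.
move=> n le_cn; have /gez0_abs nc_eq : 0 <= n%:Z + c by lia.
rewrite /conv_seq -nc_eq alt_conv_b0 nc_eq sign_absz_addn; last by lia.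
by rewrite mulr0 addr0 mulrA.
Qed.

Lemma quasipoly_conv_seqS d b c :
  quasipoly (conv_seq d b c) -> quasipoly (conv_seq d b (c - 1)) ->
  quasipoly (conv_seq d (b + 1) c).
Proof.
move=> Qc Qc1; apply: (quasipoly_eq 0 _ (quasipolyD Qc Qc1)) => n _.
by rewrite /conv_seq alt_conv_pascal_b; congr (alt_conv _ _ _ + alt_conv _ _ _); lia.
Qed.

Lemma quasipoly_conv_seqN b :
  (forall d c, quasipoly (conv_seq d b c)) ->
  forall d c, quasipoly (conv_seq d (b - 1) c).
Proof.
move=> Qb d c; apply: quasipoly_of_rec; apply: (quasipoly_eq 0) (Qb d (c + 1)) => n _.
rewrite /conv_seq.
have -> : n.+1%:Z + d = (n%:Z + d) + 1 by lia.
have -> : n%:Z + (c + 1) = (n%:Z + c) + 1 by lia.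
have -> : n.+1%:Z + c = (n%:Z + c) + 1 by lia.
rewrite [in RHS]alt_conv_pascal_b alt_conv_pascal_a !addrK; ring.
Qed.

Lemma quasipoly_conv_seq d b c : quasipoly (conv_seq d b c).
Proof.
elim/int_rect: b d c => [|b IHb|b IHb] d c; first exact: quasipoly_conv_seq0.
  by rewrite -addn1 PoszD; apply: quasipoly_conv_seqS.
by rewrite -addn1 PoszD opprD; apply: quasipoly_conv_seqN.
Qed.

Lemma sigmaE r1 r2 r3 i j k n :
  sigma r1 r2 r3 i j k n = conv_seq (r1 - i%:Z) (r2 - j%:Z) (k%:Z + r3) n.
Proof.
rewrite /sigma /conv_seq /alt_conv /=.
have -> : (k + n)%:Z + r3 = n%:Z + (k%:Z + r3) by lia.
apply: eq_bigr => t _.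
have -> : (i + t)%:Z - i%:Z = t by lia.
by congr (_ * binz _ _ * binz _ _) => //; move: (val t) => u; lia.
Qed.

Theorem lemma11 (r1 r2 r3 : int) (i j k : nat) :
  exists (p1 p2 : {poly rat}) (N : nat),
    forall n : nat, (N <= n)%N ->
      sigma r1 r2 r3 i j k n
      = (-1) ^+ n * (p1.[n%:R] + 2 ^+ n * p2.[n%:R]).
Proof.
have [P [Q [N [PP PQ sigmaPQ]]]] :=
  quasipoly_conv_seq (r1 - i%:Z) (r2 - j%:Z) (k%:Z + r3).
have [p1 [N1 Pp1]] := eventually_polyP PP.
have [p2 [N2 Qp2]] := eventually_polyP PQ.
exists p1, p2, (maxn N (maxn N1 N2)) => n.
rewrite !geq_max => /and3P[le_Nn le_N1n le_N2n].
by rewrite sigmaE sigmaPQ // Pp1 // Qp2.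
Qed.
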